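(* Let $K\ge1$ be an integer and let $s:[0,\infty)\to\mathbb{R}$ be differentiable with $s(0)=s'(0)=0$, convex on $[0,K]$, and with $s(j)\neq0$ for some $j\in\{1,\dots,K\}$. Define $$\mathsf{Eff}_K=\frac{1}{K+1}\cdot\frac{\sum_{j=1}^K(K+1-j)\,s(j)^2}{\sum_{j=1}^K(K+1-j)\,s(j)},\qquad \mathsf{Eff}^{\mathrm{lb}}_k=\frac{1}{k+1}\,s\!\left(\frac{k+1}{2}\right),\ k\ge0.$$ Then $\mathsf{Eff}_K\ge\mathsf{Eff}^{\mathrm{lb}}_K$, and $k\mapsto\mathsf{Eff}^{\mathrm{lb}}_k$ is non-decreasing on $\{0,1,\dots,K\}$. *)

From HB Require Import structures.
From mathcomp Require Import all_boot all_order all_algebra.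
From mathcomp Require Import all_classical all_reals all_analysis.
Set Implicit Arguments. Unset Strict Implicit. Unset Printing Implicit Defensive.
Import Order.TTheory GRing.Theory Num.Theory.
Import numFieldNormedType.Exports.
Local Open Scope ring_scope.

Definition Eff (R : realType) (s : R -> R) (K : nat) : R :=
  (K.+1%:R)^-1 *
  ((\sum_(1 <= j < K.+1) (K.+1 - j)%:R * (s j%:R) ^+ 2) /
   (\sum_(1 <= j < K.+1) (K.+1 - j)%:R * s j%:R)).

Definition Eff_lb (R : realType) (s : R -> R) (k : nat) : R :=
  (k.+1%:R)^-1 * s (k.+1%:R / 2).

From HB Require Import structures.
From mathcomp Require Import all_boot all_order all_algebra.
From mathcomp Require Import all_classical all_reals all_analysis.
From mathcomp Require Import ring lra zify.
Set Implicit Arguments. Unset Strict Implicit. Unset Printing Implicit Defensive.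
Import Order.TTheory GRing.Theory Num.Theory.
Import numFieldNormedType.Exports.
Local Open Scope classical_set_scope.
Local Open Scope ring_scope.

(* Let m = (K+1)/2 and w_j = K+1-j.  Since s is convex with s(0) = 0, s(x)/x is
   nondecreasing on (0, K], which gives the monotonicity of Eff^lb_k = s((k+1)/2)/(k+1),
   and with the vanishing right derivative at 0 it gives s >= 0.  The main inequality
   amounts to sum_j w_j s(j) (s(j) - s(m)) >= 0.  No integer lies strictly between K/2
   and m, so convexity yields s(j) - s(m) >= 2 (s(m) - s(K/2)) (j - m) with a
   nonnegative slope, and it remains to show sum_j w_j s(j) (j - m) >= 0: pairing j with
   K+1-j turns each pair into (X - Y)(Y s(X) - X s(Y))/2 >= 0, again because s(x)/x is
   nondecreasing.  Differentiability of s away from 0 is never used. *)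

Section ConvexFacts.
Variables (R : realType) (K : R) (s : R -> R).
Hypothesis hconv : convex_function (E := R^o) `[0, K] s.

Lemma convex_chord x y z : 0 <= x -> x < y -> y < z -> z <= K ->
  s y * (z - x) <= s x * (z - y) + s z * (y - x).
Proof.
move=> x0 xy yz zK.
have t0 : 0 <= (z - y) / (z - x) by rewrite divr_ge0 //; lra.
have t1 : (z - y) / (z - x) <= 1 by rewrite ler_pdivrMr //; lra.
have hx : x \in `[0, K]%classic by rewrite inE /= in_itv /=; apply/andP; split; lra.
have hz : z \in `[0, K]%classic by rewrite inE /= in_itv /=; apply/andP; split; lra.
have := hconv (Itv01 t0 t1) hx hz.
rewrite [X in s X]convRE [X in _ <= X]convRE /= /unstable.onem.
have -> : (z - y) / (z - x) * x + (1 - (z - y) / (z - x)) * z = y by field; lra.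
rewrite -(@ler_pM2r _ (z - x)); last lra.
by congr (_ <= _); field; lra.
Qed.

Lemma convex_secant_le p m X : 0 <= p -> p < m -> m <= K ->
  0 <= X -> X <= K -> X <= p \/ m <= X ->
  (s m - s p) * (X - m) <= (s X - s m) * (m - p).
Proof.
move=> p0 pm mK X0 XK [Xp|mX].
- have [Xp'|->] : X < p \/ X = p by case: ltgtP Xp => //; [left|right].
  + have := convex_chord X0 Xp' pm mK; nra.
  + lra.
- have [mX'|<-] : m < X \/ m = X by case: ltgtP mX => //; [left|right].
  + have := convex_chord p0 pm mX' XK; nra.
  + lra.
Qed.

Hypothesis hs0 : s 0 = 0.

Lemma convex_ratio_le x y : 0 < x -> x <= y -> y <= K -> s x * y <= s y * x.
Proof.
move=> x0 xy yK; have [<-|xy'] := eqVneq x y; first by rewrite mulrC.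
have := @convex_chord 0 x y (lexx 0) x0 _ yK.
rewrite hs0 lt_neqAle xy' xy => /(_ isT); lra.
Qed.

Lemma convex_pair_center_ge0 X Y : 0 < X -> 0 < Y -> X <= K -> Y <= K ->
  0 <= Y * s X * (X - (X + Y) / 2) + X * s Y * (Y - (X + Y) / 2).
Proof.
move=> X0 Y0 XK YK.
have -> : Y * s X * (X - (X + Y) / 2) + X * s Y * (Y - (X + Y) / 2)
          = (X - Y) * (Y * s X - X * s Y) / 2 by field.
apply: divr_ge0; last lra.
have [XY|YX] := lerP X Y.
- have := convex_ratio_le X0 XY YK; nra.
- have := convex_ratio_le Y0 (ltW YX) XK; nra.
Qed.

(* If [s x < 0], monotonicity of [s h / h] keeps the difference quotients at [0+]
   below [s x / x < 0]. *)
Lemma convex_ge0_rderiv0 :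
  (fun h : R => h^-1 * (s h - s 0)) @ 0^'+ --> (0 : R) ->
  forall x, 0 < x -> x <= K -> 0 <= s x.
Proof.
move=> hds0 x x0 xK; rewrite leNgt; apply/negP => sx.
have e0 : 0 < - s x / x by rewrite divr_gt0 //; lra.
move/cvgrPdist_lt: hds0 => /(_ _ e0) near_slope.
have : \forall h \near 0^'+, (0 < h /\ h < x) /\
    `|0 - h^-1 * (s h - s 0)| < - s x / x.
  near=> h; split; [split|].
  - near: h; exact: nbhs_right_gt.
  - near: h; exact: nbhs_right_lt.
  - near: h; exact: near_slope.
move=> /filter_ex[h [[h0 hx]]].
rewrite hs0 subr0 sub0r normrN ltr_norml => /andP[+ _].
have : h^-1 * s h <= s x / x.
  rewrite mulrC ler_pdivrMr // mulrAC ler_pdivlMr //.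
  exact: convex_ratio_le h0 (ltW hx) xK.
move=> ? ?; lra.
Unshelve. all: end_near.
Qed.

End ConvexFacts.

Lemma sum_nat_pair_ge0 (R : numDomainType) (n : nat) (f : nat -> R) :
  (forall j, (1 <= j <= n)%N -> 0 <= f j + f (n.+1 - j)%N) ->
  0 <= \sum_(1 <= j < n.+1) f j.
Proof.
move=> hpair.
have : 0 <= \sum_(1 <= j < n.+1) (f j + f (n.+1 - j)%N).
  rewrite big_seq; apply: sumr_ge0 => j; rewrite mem_index_iota ltnS.
  exact: hpair.
rewrite big_split /= [X in _ + X]big_nat_rev /=.
rewrite [X in _ + X](eq_big_nat _ _ (F2 := f)) -?mulr2n ?pmulrn_lge0 //.
by move=> j /andP[_ jn]; rewrite add1n subSS subKn // ltnW.
Qed.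

Section Efficiency.
Variables (R : realType) (K : nat) (s : R -> R).
Hypotheses (hconv : convex_function (E := R^o) `[0, K%:R] s) (hs0 : s 0 = 0).

Lemma Eff_lb_le k1 k2 : (k1 <= k2)%N -> (k2 <= K)%N ->
  Eff_lb s k1 <= Eff_lb s k2.
Proof.
move=> k12 k2K; have [-> //|k12'] := eqVneq k1 k2; rewrite /Eff_lb.
have a1 : 1 <= k1.+1%:R :> R by rewrite ler1n.
have ab : k1.+1%:R <= k2.+1%:R :> R by rewrite ler_nat.
have bK : k2.+1%:R <= 2 * K%:R :> R.
  have : (1 <= k2)%N by apply: leq_ltn_trans (leq0n k1) _; rewrite ltn_neqAle k12' k12.
  rewrite -(ler_nat R) in k2K; rewrite -(ler_nat R) -natr1; lra.
set a : R := k1.+1%:R in a1 ab *; set b : R := k2.+1%:R in ab bK *.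
have ratio_le : s (a / 2) * (b / 2) <= s (b / 2) * (a / 2).
  by apply: (convex_ratio_le hconv hs0); lra.
rewrite mulrC ler_pdivrMr; last lra.
rewrite -mulrA [b^-1 * _]mulrC ler_pdivlMr; last lra.
by rewrite !mulrA in ratio_le; lra.
Qed.

Hypothesis hs_ge0 : forall x, 0 < x -> x <= K%:R -> 0 <= s x.

Let w (j : nat) : R := (K.+1 - j)%:R.
Let m : R := K.+1%:R / 2.
Let p : R := K%:R / 2.

Let center_sub : m - p = 1 / 2.
Proof. by rewrite /m /p -[K.+1%:R]natr1; field. Qed.

Lemma weighted_s_ge0 j : (1 <= j <= K)%N -> 0 <= w j * s j%:R.
Proof.
move=> /andP[j1 jK]; apply: mulr_ge0; first exact: ler0n.
by apply: hs_ge0; rewrite ?ltr0n ?ler_nat.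
Qed.

Lemma sum_weighted_s_gt0 :
  (exists j : nat, [/\ (1 <= j)%N, (j <= K)%N & s j%:R != 0]) ->
  0 < \sum_(1 <= j < K.+1) w j * s j%:R.
Proof.
case=> j [j1 jK sj].
have F_ge0 i : i \in index_iota 1 K.+1 -> 0 <= w i * s i%:R.
  by rewrite mem_index_iota ltnS; exact: weighted_s_ge0.
rewrite big_seq lt_def sumr_ge0 // andbT psumr_neq0 //.
apply/hasP; exists j; rewrite mem_index_iota j1 ltnS jK //=.
rewrite lt_def weighted_s_ge0 ?j1 // andbT.
by rewrite mulf_neq0 // pnatr_eq0 subn_eq0 -ltnNge ltnS.
Qed.

Lemma sum_weighted_center_ge0 :
  0 <= \sum_(1 <= j < K.+1) w j * s j%:R * (j%:R - m).
Proof.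
apply: sum_nat_pair_ge0 => j /andP[j1 jK].
have m_eq : m = (j%:R + (K.+1 - j)%:R) / 2 by rewrite /m -natrD subnKC // leqW.
rewrite /w subKn ?leqW // m_eq.
by apply: convex_pair_center_ge0; rewrite // ?ltr0n ?ler_nat; lia.
Qed.

Lemma nat_secant_center_le j : (1 <= j <= K)%N ->
  2 * (s m - s p) * (j%:R - m) <= s j%:R - s m.
Proof.
move=> /andP[j1 jK].
have [jK' j1'] : j%:R <= K%:R :> R /\ 1 <= j%:R :> R by rewrite ler_nat ler1n.
have outside : j%:R <= p \/ m <= j%:R.
  have [h|h] := leqP (2 * j) K; [left|right]; move: h;
    rewrite -?(ler_nat R) natrM /p /m -?[K.+1%:R]natr1 => ?; lra.
have p_ge0 : 0 <= p by rewrite /p divr_ge0 ?ler0n.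
have mK : m <= K%:R by rewrite /m -[K.+1%:R]natr1; lra.
have mp := center_sub.
have : (s m - s p) * (j%:R - m) <= (s j%:R - s m) * (m - p).
  by apply: (convex_secant_le hconv p_ge0 _ mK _ jK' outside); lra.
by rewrite mp; lra.
Qed.

Lemma Eff_lb_le_Eff :
  (exists j : nat, [/\ (1 <= j)%N, (j <= K)%N & s j%:R != 0]) ->
  Eff_lb s K <= Eff s K.
Proof.
move=> hnz; have K_ge1 : 1 <= K%:R :> R.
  by case: hnz => j [j1 jK _]; rewrite ler1n (leq_trans j1 jK).
have p_gt0 : 0 < p by rewrite /p; lra.
have mp := center_sub.
have mK : m <= K%:R by rewrite /m -[K.+1%:R]natr1; lra.
have sm_ge0 : 0 <= s m by apply: hs_ge0; lra.
have sp_le : s p <= s m.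
  rewrite -(@ler_pM2r _ m); last lra.
  apply: le_trans (convex_ratio_le hconv hs0 p_gt0 _ mK) _; first lra.
  by rewrite ler_wpM2l //; lra.
have := sum_weighted_center_ge0; have := sum_weighted_s_gt0 hnz.
set S1 := \sum_(1 <= j < K.+1) _; set T := \sum_(1 <= j < K.+1) _ => S1_gt0 T_ge0.
set S2 := \sum_(1 <= j < K.+1) w j * s j%:R ^+ 2.
have : 2 * (s m - s p) * T <= S2 - s m * S1.
  rewrite /T /S1 /S2 !mulr_sumr -sumrB; apply: ler_sum_nat => j j1K.
  have := ler_wpM2l (weighted_s_ge0 j1K) (nat_secant_center_le j1K).
  by congr (_ <= _); ring.
have := mulr_ge0 (_ : 0 <= 2 * (s m - s p)) T_ge0.
rewrite /Eff_lb /Eff -[\sum_(1 <= j < K.+1) _ * s j%:R]/S1.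
rewrite -[\sum_(1 <= j < K.+1) _ * s j%:R ^+ 2]/S2 -/m.
rewrite ler_pM2l ?invr_gt0 ?ltr0n // ler_pdivlMr //.
by move=> /(_ ltac:(lra)); lra.
Qed.

End Efficiency.

Theorem mainTheorem5 (R : realType) (K : nat) (s : R -> R)
  (hK : (1 <= K)%N)
  (hdiff : forall x : R, 0 < x -> derivable s x 1)
  (hs0 : s 0 = 0)
  (hds0 : (fun h : R => h^-1 * (s h - s 0)) @ 0^'+ --> (0 : R))
  (hconv : convex_function (E := R^o) `[0, K%:R] s)
  (hnz : exists j : nat, [/\ (1 <= j)%N, (j <= K)%N & s j%:R != 0]) :
  Eff_lb s K <= Eff s K /\
  (forall k1 k2 : nat, (k1 <= k2)%N -> (k2 <= K)%N -> Eff_lb s k1 <= Eff_lb s k2).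
Proof.
split; last exact: Eff_lb_le.
apply: Eff_lb_le_Eff hnz => //.
exact: convex_ge0_rderiv0 hconv hs0 hds0.
Qed.
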